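(* Let $h>0$ and $0\le\alpha<1/4$. Let $g\in\mathcal G$, write $t=\dfrac{2h}{\tan(\pi/4-\alpha)}$, and let $s_p=g+(-t/2,0,h)$, $s_q=g+(t/2,0,h)$ (both in $\mathcal S$). Then $$\varepsilon(g,\{s_p,s_q\})\;\le\;\sqrt{\frac{1+2\alpha}{1-4\alpha}}\;\varepsilon(g,\mathcal S).$$
   Context: Work in $\mathbb{R}^3$ with coordinates $(x,y,z)$. The ground plane is $\mathcal G=\{z=0\}$ and the viewing plane is $\mathcal S=\{z=h\}$, $h>0$. Fix an error bound $\alpha>0$. For a point $s$ and a unit vector $u$, the cone $K(s,u)=\{s+rv:\ r\ge0,\ |v|=1,\ \angle(v,u)\le\alpha\}$ (right circular cone with apex $s$, axis $u$, half-angle $\alpha$). For a target $g$ and camera location $s$, $\mathcal K(g,s)$ is the set of all cones $K(s,u)$, over all unit vectors $u$, containing $g$. For a set $C\subseteq\mathcal S$ of camera locations, the worst-case uncertainty is $\varepsilon(g,C)=\sup\{\operatorname{diam}(\bigcap_{s\in C}K_s): K_s\in\mathcal K(g,s)\ \forall s\in C\}$; $\varepsilon(g,\mathcal S)$ uses every point of $\mathcal S$ as a camera. *)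

From Stdlib Require Import Reals Lra.
Open Scope R_scope.

Record vec3 := mkV { vx : R; vy : R; vz : R }.

Definition vadd (a b : vec3) : vec3 := mkV (vx a + vx b) (vy a + vy b) (vz a + vz b).
Definition vsub (a b : vec3) : vec3 := mkV (vx a - vx b) (vy a - vy b) (vz a - vz b).
Definition vscale (r : R) (a : vec3) : vec3 := mkV (r * vx a) (r * vy a) (r * vz a).
Definition dot (a b : vec3) : R := vx a * vx b + vy a * vy b + vz a * vz b.
Definition vnorm (a : vec3) : R := sqrt (dot a a).
Definition dist (a b : vec3) : R := vnorm (vsub a b).

Definition angle (v u : vec3) : R := acos (dot v u / (vnorm v * vnorm u)).

Definition ground (g : vec3) : Prop := vz g = 0.
Definition view_plane (h : R) (s : vec3) : Prop := vz s = h.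

Definition cone (alpha : R) (s u : vec3) (p : vec3) : Prop :=
  exists r v, 0 <= r /\ vnorm v = 1 /\ angle v u <= alpha /\ p = vadd s (vscale r v).

Definition diam_le (A : vec3 -> Prop) (d : R) : Prop :=
  forall x y, A x -> A y -> dist x y <= d.

(* A choice of cones K_s in K(g,s) for every camera s in C is given by a choice
   of unit axes u s with g in K(s, u s).  "eps_le alpha g C d" means
   eps(g,C) <= d, i.e. d bounds the diameter of every such intersection
   bigcap_{s in C} K_s (this is the definition of the supremum being <= d). *)
Definition admissible_axes (alpha : R) (g : vec3) (C : vec3 -> Prop) (u : vec3 -> vec3) : Prop :=
  forall s, C s -> vnorm (u s) = 1 /\ cone alpha s (u s) g.

Definition cone_inter (alpha : R) (C : vec3 -> Prop) (u : vec3 -> vec3) (p : vec3) : Prop :=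
  forall s, C s -> cone alpha s (u s) p.

Definition eps_le (alpha : R) (g : vec3) (C : vec3 -> Prop) (d : R) : Prop :=
  forall u, admissible_axes alpha g C u -> diam_le (cone_inter alpha C u) d.

From Pilot Require Import Defs.
From Stdlib Require Import Reals Lra Lia Psatz ZArith List.
Import ListNotations.
Open Scope R_scope.

(* Lower bound: for b = 4 h tan alpha / (1 - tan alpha)^2, every camera of the viewing plane
   sees g and the point g - b e_z within an angle 2 alpha, so the cones around the bisecting
   axes all contain both points and eps(g, S) >= b.
   Upper bound: let p, q lie in both cones, l_i be the depth of their midpoint along the axis
   u_i, and k = u1.u2, which lies in [- sin (4 alpha), 0]. A section of a cone at depth l has
   diameter at most 2 l tan alpha, so |p - q|^2 (1 + k) <= 4 tan^2 alpha (l1^2 + l2^2), and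
   comparing l1 u1 - l2 u2 with the baseline s2 - s1 bounds l1 + l2 and |l1 - l2|.
   Eliminating l1, l2 and k leaves an inequality in a = tan alpha which, separately for
   a <= 3/20 and a >= 3/20, reduces to the positivity of an integer polynomial, certified by
   interval evaluation of its Horner scheme. *)

Lemma Rdiv_nonneg x y : 0 <= x -> 0 < y -> 0 <= x / y.
Proof. intros. apply Rmult_le_pos; [lra | left; apply Rinv_0_lt_compat; lra]. Qed.

Lemma vec3_eq a b : vx a = vx b -> vy a = vy b -> vz a = vz b -> a = b.
Proof. destruct a, b; cbn; intros; subst; reflexivity. Qed.

Ltac vec_expand := unfold dot, vadd, vsub, vscale; cbn.

Lemma dot_comm a b : dot a b = dot b a.
Proof. vec_expand; ring. Qed.

Lemma dot_self_ge0 a : 0 <= dot a a.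
Proof. vec_expand; nra. Qed.

Lemma vnorm_ge0 a : 0 <= vnorm a.
Proof. apply sqrt_pos. Qed.

Lemma vnorm_sqr a : vnorm a * vnorm a = dot a a.
Proof. apply sqrt_sqrt, dot_self_ge0. Qed.

Lemma vnorm_unit_dot u : vnorm u = 1 -> dot u u = 1.
Proof. intros hu. rewrite <- vnorm_sqr, hu. ring. Qed.

Lemma vnorm_le_iff v c : 0 <= c -> vnorm v <= c <-> dot v v <= c ^ 2.
Proof.
  intros hc. pose proof (vnorm_sqr v). pose proof (vnorm_ge0 v).
  split; intros h; [nra|]. apply Rsqr_incr_0_var; unfold Rsqr; nra.
Qed.

Lemma dot_sqr_le a b : (dot a b) ^ 2 <= dot a a * dot b b.
Proof.
  destruct a as [a1 a2 a3], b as [b1 b2 b3]; unfold dot; cbn.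
  (* Lagrange's identity *)
  match goal with |- ?l <= ?r =>
    replace r with (l + ((a1 * b2 - a2 * b1) ^ 2 + (a1 * b3 - a3 * b1) ^ 2
                         + (a2 * b3 - a3 * b2) ^ 2)) by ring end.
  pose proof (pow2_ge_0 (a1 * b2 - a2 * b1)). pose proof (pow2_ge_0 (a1 * b3 - a3 * b1)).
  pose proof (pow2_ge_0 (a2 * b3 - a3 * b2)). lra.
Qed.

Lemma Rabs_dot_le a b : Rabs (dot a b) <= vnorm a * vnorm b.
Proof.
  pose proof (dot_sqr_le a b). pose proof (vnorm_sqr a). pose proof (vnorm_sqr b).
  pose proof (vnorm_ge0 a). pose proof (vnorm_ge0 b).
  apply Rsqr_incr_0_var; [rewrite <- Rsqr_abs; unfold Rsqr; nra | nra].
Qed.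

Lemma dot_le_vnorm a b : dot a b <= vnorm a * vnorm b.
Proof. eapply Rle_trans; [apply Rle_abs | apply Rabs_dot_le]. Qed.

Lemma dot_ge_vnorm a b : - (vnorm a * vnorm b) <= dot a b.
Proof.
  pose proof (Rabs_dot_le a b). pose proof (Rle_abs (- dot a b)). rewrite Rabs_Ropp in *. lra.
Qed.

Lemma vnorm_add_le a b : vnorm (vadd a b) <= vnorm a + vnorm b.
Proof.
  pose proof (vnorm_ge0 a). pose proof (vnorm_ge0 b).
  apply vnorm_le_iff; [lra|].
  replace (dot (vadd a b) (vadd a b)) with (dot a a + 2 * dot a b + dot b b) by (vec_expand; ring).
  pose proof (dot_le_vnorm a b). pose proof (vnorm_sqr a). pose proof (vnorm_sqr b). nra.
Qed.

Lemma vnorm_sub_le a b : vnorm (vsub a b) <= vnorm a + vnorm b.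
Proof.
  pose proof (vnorm_ge0 a). pose proof (vnorm_ge0 b).
  apply vnorm_le_iff; [lra|].
  replace (dot (vsub a b) (vsub a b)) with (dot a a - 2 * dot a b + dot b b) by (vec_expand; ring).
  pose proof (dot_ge_vnorm a b). pose proof (vnorm_sqr a). pose proof (vnorm_sqr b). nra.
Qed.

Lemma vnorm_scale r a : 0 <= r -> vnorm (vscale r a) = r * vnorm a.
Proof.
  intros hr. unfold vnorm.
  replace (dot (vscale r a) (vscale r a)) with (r ^ 2 * dot a a) by (vec_expand; ring).
  rewrite sqrt_mult_alt, sqrt_pow2; auto using pow2_ge_0.
Qed.

Lemma unit_dot_bound x y : vnorm x = 1 -> vnorm y = 1 -> -1 <= dot x y <= 1.
Proof.
  intros hx hy. pose proof (dot_le_vnorm x y). pose proof (dot_ge_vnorm x y).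
  rewrite hx, hy in *. lra.
Qed.

Definition normalize (v : vec3) : vec3 := vscale (/ vnorm v) v.

Lemma vnorm_normalize v : 0 < vnorm v -> vnorm (normalize v) = 1.
Proof.
  intros h. unfold normalize. rewrite vnorm_scale; [field; lra|].
  left; apply Rinv_0_lt_compat; lra.
Qed.

Lemma dot_normalize_l v w : dot (normalize v) w = dot v w / vnorm v.
Proof. unfold normalize, Rdiv. vec_expand. ring. Qed.

Lemma dot_normalize v w : 0 < vnorm v -> 0 < vnorm w ->
  dot (normalize v) (normalize w) = dot v w / (vnorm v * vnorm w).
Proof.
  intros. rewrite dot_normalize_l, dot_comm, dot_normalize_l, dot_comm. field; lra.
Qed.

Definition uangle (x y : vec3) : R := acos (dot x y).

Lemma uangle_bound x y : 0 <= uangle x y <= PI.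
Proof. apply acos_bound. Qed.

Lemma uangle_comm x y : uangle x y = uangle y x.
Proof. unfold uangle; rewrite dot_comm; reflexivity. Qed.

Lemma cos_uangle x y : vnorm x = 1 -> vnorm y = 1 -> cos (uangle x y) = dot x y.
Proof. intros. apply cos_acos, unit_dot_bound; auto. Qed.

Lemma angle_unit v u : vnorm v = 1 -> vnorm u = 1 -> angle v u = uangle v u.
Proof. intros hv hu. unfold angle, uangle. rewrite hv, hu. f_equal. field. Qed.

Lemma uangle_le_iff x y b : vnorm x = 1 -> vnorm y = 1 -> 0 <= b <= PI ->
  uangle x y <= b <-> cos b <= dot x y.
Proof.
  intros hx hy hb. pose proof (uangle_bound x y). rewrite <- cos_uangle by auto.
  split; intros h; [apply cos_decr_1 | apply (cos_decr_0 b)]; lra.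
Qed.

Lemma dot_le_of_uangle_ge x y b : vnorm x = 1 -> vnorm y = 1 -> 0 <= b <= PI ->
  b <= uangle x y -> dot x y <= cos b.
Proof.
  intros hx hy hb h. pose proof (uangle_bound x y). rewrite <- cos_uangle by auto.
  apply cos_decr_1; lra.
Qed.

Lemma uangle_of_cos x y b : 0 <= b <= PI -> dot x y = cos b -> uangle x y = b.
Proof. intros hb h. unfold uangle. rewrite h. apply acos_cos; lra. Qed.

Lemma uangle_triangle x y z : vnorm x = 1 -> vnorm y = 1 -> vnorm z = 1 ->
  uangle x z <= uangle x y + uangle y z.
Proof.
  intros hx hy hz.
  pose proof (uangle_bound x y). pose proof (uangle_bound y z). pose proof (uangle_bound x z).
  destruct (Rle_dec PI (uangle x y + uangle y z)); [lra|].
  apply (cos_decr_0 (uangle x y + uangle y z)); try lra.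
  (* split x and z into their components along y and orthogonal to y *)
  set (x' := vsub x (vscale (dot x y) y)). set (z' := vsub z (vscale (dot y z) y)).
  pose proof (vnorm_unit_dot x hx). pose proof (vnorm_unit_dot y hy). pose proof (vnorm_unit_dot z hz).
  assert (Exz : dot x' z' = dot x z - dot x y * dot y z * (2 - dot y y))
    by (unfold x', z'; vec_expand; ring).
  assert (Exx : dot x' x' = 1 - (dot x y)^2 * (2 - dot y y) + (dot x x - 1))
    by (unfold x'; vec_expand; ring).
  assert (Ezz : dot z' z' = 1 - (dot y z)^2 * (2 - dot y y) + (dot z z - 1))
    by (unfold z'; vec_expand; ring).
  assert (Nx : vnorm x' = sin (uangle x y)).
  { unfold uangle, vnorm. rewrite sin_acos by (apply unit_dot_bound; auto).
    f_equal. rewrite Exx. unfold Rsqr. nra. }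
  assert (Nz : vnorm z' = sin (uangle y z)).
  { unfold uangle, vnorm. rewrite sin_acos by (apply unit_dot_bound; auto).
    f_equal. rewrite Ezz. unfold Rsqr. nra. }
  rewrite cos_plus, !cos_uangle, <- Nx, <- Nz by auto.
  pose proof (dot_ge_vnorm x' z'). nra.
Qed.

Lemma cone_dot_ge alpha s u x : 0 <= alpha <= PI -> vnorm u = 1 -> cone alpha s u x ->
  cos alpha * vnorm (vsub x s) <= dot (vsub x s) u.
Proof.
  intros ha hu [r [v [hr [hv [hang ->]]]]].
  replace (vsub (vadd s (vscale r v)) s) with (vscale r v) by (apply vec3_eq; vec_expand; ring).
  rewrite vnorm_scale, hv by auto.
  rewrite angle_unit, uangle_le_iff in hang by auto.
  replace (dot (vscale r v) u) with (r * dot v u) by (vec_expand; ring). nra.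
Qed.

Lemma cone_of_dot_ge alpha s u x : 0 <= alpha <= PI -> vnorm u = 1 -> 0 < vnorm (vsub x s) ->
  cos alpha * vnorm (vsub x s) <= dot (vsub x s) u -> cone alpha s u x.
Proof.
  intros ha hu hpos h.
  exists (vnorm (vsub x s)), (normalize (vsub x s)).
  pose proof (vnorm_normalize _ hpos) as hv.
  repeat split; [lra | exact hv | |].
  - rewrite angle_unit, uangle_le_iff, dot_normalize_l by auto.
    apply (Rmult_le_reg_l (vnorm (vsub x s))); [lra|]. field_simplify; lra.
  - unfold normalize. revert hpos. generalize (vnorm (vsub x s)). intros r hr.
    apply vec3_eq; vec_expand; field; lra.
Qed.

Lemma cone_axis_dot_ge alpha s u x rho d : 0 <= alpha <= PI -> vnorm u = 1 -> vnorm d = 1 ->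
  0 < rho -> vsub x s = vscale rho d -> cone alpha s u x -> cos alpha <= dot u d.
Proof.
  intros ha hu hd hr E hx.
  pose proof (cone_dot_ge alpha s u x ha hu hx) as H.
  rewrite E, vnorm_scale, hd in H by lra.
  replace (dot (vscale rho d) u) with (rho * dot u d) in H by (vec_expand; ring).
  nra.
Qed.

(** * A lower bound for the whole viewing plane *)

Lemma cos_sin_quarter alpha : 0 <= alpha < PI / 4 ->
  0 < cos alpha /\ 0 <= sin alpha < cos alpha /\ (cos alpha)^2 + (sin alpha)^2 = 1.
Proof.
  intros ha. pose proof PI_RGT_0.
  assert (hc : 0 < cos alpha) by (apply cos_gt_0; lra).
  assert (hs : 0 <= sin alpha) by (apply sin_ge_0; lra).
  assert (e : (cos alpha)^2 + (sin alpha)^2 = 1) by (rewrite <- (sin2_cos2 alpha); unfold Rsqr; ring).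
  repeat split; auto.
  (* tan is increasing on [0, PI/4], with tan (PI/4) = 1 *)
  assert (tan alpha < 1).
  { rewrite <- tan_PI4. destruct (Req_dec alpha 0) as [-> | ]; [rewrite tan_0, tan_PI4; lra|].
    apply tan_increasing; lra. }
  unfold tan in H0. apply (Rmult_lt_reg_r (/ cos alpha)); [apply Rinv_0_lt_compat; lra|].
  rewrite Rinv_r by lra. exact H0.
Qed.

Lemma bisector_dot_ge v1 v2 c : vnorm v1 = 1 -> vnorm v2 = 1 -> 0 < c ->
  2 * c^2 - 1 <= dot v1 v2 ->
  let w := normalize (vadd v1 v2) in
  vnorm w = 1 /\ c <= dot v1 w /\ c <= dot v2 w.
Proof.
  intros h1 h2 hc hd w.
  pose proof (vnorm_unit_dot v1 h1). pose proof (vnorm_unit_dot v2 h2).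
  assert (E : dot (vadd v1 v2) (vadd v1 v2) = 2 + 2 * dot v1 v2)
    by (transitivity (dot v1 v1 + dot v2 v2 + 2 * dot v1 v2); [vec_expand; ring | lra]).
  assert (N : vnorm (vadd v1 v2) = sqrt (2 + 2 * dot v1 v2)) by (unfold vnorm; rewrite E; reflexivity).
  set (n := vnorm (vadd v1 v2)) in *.
  assert (hn : 0 < n) by (rewrite N; apply sqrt_lt_R0; nra).
  assert (hn2 : n * n = 2 + 2 * dot v1 v2) by (rewrite N; apply sqrt_sqrt; nra).
  assert (key : c * n <= 1 + dot v1 v2) by (apply Rsqr_incr_0_var; unfold Rsqr; nra).
  unfold w. rewrite (dot_comm v1), (dot_comm v2), !dot_normalize_l. fold n.
  replace (dot (vadd v1 v2) v1) with (dot v1 v1 + dot v1 v2) by (vec_expand; ring).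
  replace (dot (vadd v1 v2) v2) with (dot v1 v2 + dot v2 v2) by (vec_expand; ring).
  repeat split; [apply vnorm_normalize; auto | |];
    apply (Rmult_le_reg_l n); auto; field_simplify; lra.
Qed.

(* A vertical segment of length b = 2 h S / (1 - S) hanging below a point at depth h
   subtends an angle whose cosine is at least C = sqrt (1 - S^2) from every point of the
   horizontal plane; P is the squared horizontal distance. *)
Lemma vertical_segment_cos_ge h b S C P : 0 < h -> 0 <= S < 1 -> 0 <= C -> C^2 + S^2 = 1 ->
  b * (1 - S) = 2 * h * S -> 0 <= P ->
  C * (sqrt (P + h^2) * sqrt (P + (h + b)^2)) <= P + h * (h + b).
Proof.
  intros hh hS hC hCS hb hP.
  assert (hb0 : 0 <= b) by nra.
  set (H := h * (h + b)).
  assert (hH : 0 <= H) by (unfold H; nra).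
  assert (key : C^2 * b^2 = 4 * S^2 * H).
  { unfold H. replace (C^2) with ((1 - S) * (1 + S)) by lra.
    assert (hb' : b * (1 + S) = 2 * S * (h + b)) by lra.
    transitivity ((b * (1 - S)) * (b * (1 + S))); [ring | rewrite hb, hb'; ring]. }
  assert (prod : (P + h^2) * (P + (h + b)^2) = (P + H)^2 + P * b^2) by (unfold H; ring).
  assert (sq : C^2 * ((P + h^2) * (P + (h + b)^2)) <= (P + H)^2).
  { rewrite prod. pose proof (pow2_ge_0 (P - H)).
    assert (S^2 * (4 * P * H) <= S^2 * (P + H)^2) by (apply Rmult_le_compat_l; nra). nra. }
  rewrite <- sqrt_mult by nra.
  assert (0 <= (P + h^2) * (P + (h + b)^2)) by nra.
  apply Rsqr_incr_0_var; [|unfold H in *; nra].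
  unfold Rsqr. rewrite <- (sqrt_sqrt ((P + h^2) * (P + (h + b)^2))) in sq by auto.
  unfold H in sq. nra.
Qed.

(* Seen from any camera, g and the point b below g lie within an angle 2 alpha of each other,
   so the cone around the bisector of the two directions contains both. *)
Lemma bisector_axis_cones h alpha g s : 0 < h -> 0 <= alpha < PI / 4 -> ground g -> view_plane h s ->
  let b := h * (4 * tan alpha / (1 - tan alpha)^2) in
  let y := vadd g (mkV 0 0 (- b)) in
  let u := normalize (vadd (normalize (vsub g s)) (normalize (vsub y s))) in
  vnorm u = 1 /\ cone alpha s u g /\ cone alpha s u y.
Proof.
  intros hh ha hg hs' b y u. unfold view_plane, ground in *.
  destruct (cos_sin_quarter alpha ha) as [hc [[hs hsc] hcs]].
  set (ca := cos alpha) in *. set (sa := sin alpha) in *.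
  set (S := 2 * sa * ca).
  assert (hS : 0 <= S < 1) by (unfold S; nra).
  assert (hb : b * (1 - S) = 2 * h * S).
  { unfold b, tan. fold ca sa. replace (1 - S) with ((ca - sa)^2) by (unfold S; nra).
    unfold S. field. lra. }
  assert (hb0 : 0 <= b) by nra.
  set (P := (vx g - vx s)^2 + (vy g - vy s)^2).
  assert (hP : 0 <= P).
  { pose proof (pow2_ge_0 (vx g - vx s)). pose proof (pow2_ge_0 (vy g - vy s)). unfold P; lra. }
  assert (Ng : vnorm (vsub g s) = sqrt (P + h^2))
    by (unfold vnorm, P; f_equal; vec_expand; rewrite hs', hg; ring).
  assert (Ny : vnorm (vsub y s) = sqrt (P + (h + b)^2))
    by (unfold vnorm, P, y; f_equal; vec_expand; rewrite hs', hg; ring).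
  assert (Dgy : dot (vsub g s) (vsub y s) = P + h * (h + b))
    by (unfold P, y; vec_expand; rewrite hs', hg; ring).
  assert (Pg : 0 < vnorm (vsub g s)) by (rewrite Ng; apply sqrt_lt_R0; nra).
  assert (Py : 0 < vnorm (vsub y s)) by (rewrite Ny; apply sqrt_lt_R0; nra).
  pose proof (vertical_segment_cos_ge h b S (ca^2 - sa^2) P hh hS ltac:(nra) ltac:(unfold S; nra) hb hP)
    as LB.
  rewrite <- Ng, <- Ny, <- Dgy in LB.
  assert (Dn : 2 * ca^2 - 1 <= dot (normalize (vsub g s)) (normalize (vsub y s))).
  { rewrite dot_normalize by auto. replace (2 * ca^2 - 1) with (ca^2 - sa^2) by lra.
    apply (Rmult_le_reg_r (vnorm (vsub g s) * vnorm (vsub y s))); [nra|].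
    unfold Rdiv. rewrite Rmult_assoc, Rinv_l, Rmult_1_r by nra. lra. }
  destruct (bisector_dot_ge _ _ ca (vnorm_normalize _ Pg) (vnorm_normalize _ Py) hc Dn)
    as [U [B1 B2]].
  fold u in U, B1, B2. rewrite dot_normalize_l in B1, B2.
  assert (hA : 0 <= alpha <= PI) by (pose proof PI_RGT_0; lra).
  repeat split; auto; apply cone_of_dot_ge; auto; fold ca.
  - apply (Rmult_le_reg_r (/ vnorm (vsub g s))); [apply Rinv_0_lt_compat; auto|].
    field_simplify; lra.
  - apply (Rmult_le_reg_r (/ vnorm (vsub y s))); [apply Rinv_0_lt_compat; auto|].
    field_simplify; lra.
Qed.

Lemma eps_view_plane_ge h alpha g E : 0 < h -> 0 <= alpha < PI / 4 -> ground g ->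
  eps_le alpha g (view_plane h) E -> h * (4 * tan alpha / (1 - tan alpha)^2) <= E.
Proof.
  intros hh ha hg heps.
  pose proof (fun s => bisector_axis_cones h alpha g s hh ha hg) as key. cbv zeta in key.
  set (b := h * (4 * tan alpha / (1 - tan alpha)^2)) in *.
  set (y := vadd g (mkV 0 0 (- b))) in *.
  assert (D : Defs.dist g y <= E).
  { apply (heps (fun s => normalize (vadd (normalize (vsub g s)) (normalize (vsub y s)))));
      intros s hs; destruct (key s hs) as [? [? ?]]; auto. }
  assert (hb0 : 0 <= b).
  { destruct (cos_sin_quarter alpha ha) as [hc [[hs hsc] _]].
    apply Rmult_le_pos; [lra | apply Rdiv_nonneg; [| apply pow_lt]]; unfold tan.
    - apply Rmult_le_pos; [lra | apply Rdiv_nonneg; lra].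
    - apply (Rmult_lt_reg_r (cos alpha)); [lra|]. field_simplify; lra. }
  unfold Defs.dist, vnorm, y in D.
  replace (dot (vsub g (vadd g (mkV 0 0 (- b)))) (vsub g (vadd g (mkV 0 0 (- b))))) with (b^2) in D
    by (vec_expand; ring).
  rewrite sqrt_pow2 in D by lra. exact D.
Qed.

(** * Two cones *)

Definition perp (u w : vec3) : vec3 := vsub w (vscale (dot w u) u).

Definition mid (p q : vec3) : vec3 := vscale (/ 2) (vadd p q).

Lemma dot_perp_self u w : vnorm u = 1 -> dot (perp u w) (perp u w) = dot w w - (dot w u)^2.
Proof.
  intros hu. pose proof (vnorm_unit_dot u hu).
  transitivity (dot w w - (dot w u)^2 * (2 - dot u u)); [unfold perp; vec_expand; ring | nra].
Qed.

Lemma dot_perp_l u w : vnorm u = 1 -> dot (perp u w) u = 0.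
Proof.
  intros hu. pose proof (vnorm_unit_dot u hu).
  transitivity (dot w u * (1 - dot u u)); [unfold perp; vec_expand; ring | nra].
Qed.

(* Bessel's inequality, for two unit vectors making an obtuse angle *)
Lemma dot_sqr_add_le d u1 u2 : vnorm u1 = 1 -> vnorm u2 = 1 -> dot u1 u2 <= 0 ->
  (dot d u1)^2 + (dot d u2)^2 <= (1 - dot u1 u2) * dot d d.
Proof.
  intros h1 h2 hk.
  pose proof (vnorm_unit_dot u1 h1). pose proof (vnorm_unit_dot u2 h2).
  set (k := dot u1 u2) in *.
  (* expand |d - x u1 - y u2|^2 >= 0 at x = (d.u1) / (1 - k), y = (d.u2) / (1 - k) *)
  set (x := dot d u1 / (1 - k)). set (y := dot d u2 / (1 - k)).
  set (r := vsub d (vadd (vscale x u1) (vscale y u2))).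
  assert (E : dot r r = dot d d - 2 * x * dot d u1 - 2 * y * dot d u2
                        + x^2 * dot u1 u1 + y^2 * dot u2 u2 + 2 * x * y * k)
    by (unfold r, k; vec_expand; ring).
  pose proof (dot_self_ge0 r).
  assert (Hx : dot d u1 = x * (1 - k)) by (unfold x; field; lra).
  assert (Hy : dot d u2 = y * (1 - k)) by (unfold y; field; lra).
  rewrite H, H0 in E. rewrite E in H1. rewrite Hx, Hy in *. clearbody x y k.
  assert (0 <= - k * (x + y)^2) by (pose proof (pow2_ge_0 (x + y)); nra).
  assert (0 <= (1 - k) * (dot d d - (x^2 + y^2) * (1 - k))) by (apply Rmult_le_pos; nra).
  nra.
Qed.

Lemma dot_add_scale_bounds ca sa u d n lam : 0 <= ca -> 0 <= sa -> ca^2 + sa^2 = 1 -> 0 <= lam ->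
  vnorm u = 1 -> vnorm d = 1 -> vnorm n = 1 -> dot d n = 0 -> ca <= dot u d ->
  lam * ca - sa <= dot u (vadd (vscale lam d) n) <= lam + sa.
Proof.
  intros hc0 hs hcs hl hu hd hn hdn hc.
  pose proof (dot_sqr_add_le u d n hd hn ltac:(lra)) as B.
  rewrite hdn, vnorm_unit_dot in B by auto.
  replace (dot u (vadd (vscale lam d) n)) with (lam * dot u d + dot u n) by (vec_expand; ring).
  rewrite (dot_comm u d), (dot_comm u n) in *.
  pose proof (unit_dot_bound d u hd hu).
  assert (Rabs (dot n u) <= sa)
    by (rewrite <- (Rabs_right sa) by lra; apply Rsqr_le_abs_0; unfold Rsqr; nra).
  pose proof (Rle_abs (dot n u)). pose proof (Rle_abs (- dot n u)). rewrite Rabs_Ropp in *.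
  split; nra.
Qed.

(* m - s_i = l_i u_i + x_i with x_i orthogonal to u_i *)
Lemma depth_difference_decomp m s1 s2 u1 u2 :
  vsub (vscale (dot (vsub m s1) u1) u1) (vscale (dot (vsub m s2) u2) u2)
  = vadd (vsub (vsub s2 s1) (perp u1 (vsub m s1))) (perp u2 (vsub m s2)).
Proof. unfold perp. apply vec3_eq; vec_expand; ring. Qed.

Section ConeDepth.

Variables ca sa : R.
Hypotheses (hc : 0 < ca) (hs : 0 <= sa) (hcs : ca^2 + sa^2 = 1).

Let a := sa / ca.

Lemma perp_le_of_dot_ge u w : vnorm u = 1 -> ca * vnorm w <= dot w u ->
  0 <= dot w u /\ vnorm (perp u w) <= a * dot w u.
Proof.
  intros hu h.
  pose proof (vnorm_ge0 w). pose proof (vnorm_sqr w).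
  assert (hl : 0 <= dot w u) by nra. split; [auto|].
  assert (ha : 0 <= a) by (apply Rdiv_nonneg; auto).
  apply vnorm_le_iff; [nra|]. rewrite dot_perp_self by auto.
  assert (0 <= (dot w u - ca * vnorm w) * (dot w u + ca * vnorm w)) by (apply Rmult_le_pos; nra).
  assert (ca^2 * dot w w <= (dot w u)^2) by nra.
  apply (Rmult_le_reg_l (ca^2)); [nra|].
  replace (ca^2 * (a * dot w u)^2) with (sa^2 * (dot w u)^2) by (unfold a; field; lra).
  nra.
Qed.

(* The cone is convex, and its section at depth l has diameter at most 2 a l. *)
Lemma cone_pair_perp_le s u p q : vnorm u = 1 ->
  ca * vnorm (vsub p s) <= dot (vsub p s) u -> ca * vnorm (vsub q s) <= dot (vsub q s) u ->
  let l := dot (vsub (mid p q) s) u in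
  0 <= l /\ vnorm (perp u (vsub (mid p q) s)) <= a * l /\ vnorm (perp u (vsub p q)) <= 2 * a * l.
Proof.
  intros hu hp hq l.
  destruct (perp_le_of_dot_ge u _ hu hp) as [lp xp].
  destruct (perp_le_of_dot_ge u _ hu hq) as [lq xq].
  assert (El : l = (dot (vsub p s) u + dot (vsub q s) u) / 2)
    by (unfold l, mid; vec_expand; field).
  assert (Em : perp u (vsub (mid p q) s) = vscale (/ 2) (vadd (perp u (vsub p s)) (perp u (vsub q s))))
    by (unfold perp, mid; apply vec3_eq; vec_expand; field).
  assert (Ed : perp u (vsub p q) = vsub (perp u (vsub p s)) (perp u (vsub q s)))
    by (unfold perp; apply vec3_eq; vec_expand; ring).
  rewrite Em, Ed, vnorm_scale by lra.
  pose proof (vnorm_add_le (perp u (vsub p s)) (perp u (vsub q s))).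
  pose proof (vnorm_sub_le (perp u (vsub p s)) (perp u (vsub q s))).
  repeat split; nra.
Qed.

Section TwoCones.

Variables s1 s2 u1 u2 p q : vec3.
Hypotheses (hu1 : vnorm u1 = 1) (hu2 : vnorm u2 = 1) (hk : dot u1 u2 <= 0)
  (hp1 : ca * vnorm (vsub p s1) <= dot (vsub p s1) u1)
  (hq1 : ca * vnorm (vsub q s1) <= dot (vsub q s1) u1)
  (hp2 : ca * vnorm (vsub p s2) <= dot (vsub p s2) u2)
  (hq2 : ca * vnorm (vsub q s2) <= dot (vsub q s2) u2).

Let k := dot u1 u2.
Let l1 := dot (vsub (mid p q) s1) u1.
Let l2 := dot (vsub (mid p q) s2) u2.
Let x1 := perp u1 (vsub (mid p q) s1).
Let x2 := perp u2 (vsub (mid p q) s2).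

Lemma two_cones_depth_ge0 : 0 <= l1 /\ 0 <= l2.
Proof.
  destruct (cone_pair_perp_le s1 u1 p q hu1 hp1 hq1) as [? _].
  destruct (cone_pair_perp_le s2 u2 p q hu2 hp2 hq2) as [? _]. auto.
Qed.

Lemma two_cones_diam_sqr_le : dot (vsub p q) (vsub p q) * (1 + k) <= 4 * a^2 * (l1^2 + l2^2).
Proof.
  destruct (cone_pair_perp_le s1 u1 p q hu1 hp1 hq1) as [L1 [_ P1]].
  destruct (cone_pair_perp_le s2 u2 p q hu2 hp2 hq2) as [L2 [_ P2]].
  assert (0 <= a) by (apply Rdiv_nonneg; auto).
  apply vnorm_le_iff in P1, P2; [|nra|nra].
  rewrite dot_perp_self in P1, P2 by auto.
  pose proof (dot_sqr_add_le (vsub p q) u1 u2 hu1 hu2 hk) as G.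
  fold k in G. fold l1 in L1, P1. fold l2 in L2, P2. lra.
Qed.

Let V := vsub (vscale l1 u1) (vscale l2 u2).

Lemma two_cones_V : V = vadd (vsub (vsub s2 s1) x1) x2.
Proof. apply depth_difference_decomp. Qed.

Lemma two_cones_depth_sqr_le :
  l1^2 + l2^2 - 2 * k * l1 * l2 <= (vnorm (vsub s2 s1) + a * (l1 + l2))^2.
Proof.
  destruct (cone_pair_perp_le s1 u1 p q hu1 hp1 hq1) as [L1 [X1 _]].
  destruct (cone_pair_perp_le s2 u2 p q hu2 hp2 hq2) as [L2 [X2 _]].
  fold l1 x1 in L1, X1. fold l2 x2 in L2, X2.
  assert (NV : vnorm V <= vnorm (vsub s2 s1) + a * (l1 + l2)).
  { rewrite two_cones_V. eapply Rle_trans; [apply vnorm_add_le|].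
    pose proof (vnorm_sub_le (vsub s2 s1) x1). lra. }
  apply vnorm_le_iff in NV; [| pose proof (vnorm_ge0 V); lra].
  replace (dot V V) with (l1^2 * dot u1 u1 + l2^2 * dot u2 u2 - 2 * l1 * l2 * k) in NV
    by (unfold V, k; vec_expand; ring).
  rewrite !vnorm_unit_dot in NV by auto. lra.
Qed.

Lemma two_cones_depth_diff_le :
  Rabs (l1 - l2) * (1 + k) <= Rabs (dot (vsub s2 s1) (vadd u1 u2)) + a * (l1 + l2).
Proof.
  destruct (cone_pair_perp_le s1 u1 p q hu1 hp1 hq1) as [L1 [X1 _]].
  destruct (cone_pair_perp_le s2 u2 p q hu2 hp2 hq2) as [L2 [X2 _]].
  fold l1 x1 in L1, X1. fold l2 x2 in L2, X2.
  pose proof (unit_dot_bound u1 u2 hu1 hu2) as Kb. fold k in Kb.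
  assert (D1 : dot V (vadd u1 u2) = (l1 - l2) * (1 + k)).
  { transitivity (l1 * dot u1 u1 - l2 * dot u2 u2 + (l1 - l2) * k); [unfold V, k; vec_expand; ring|].
    rewrite !vnorm_unit_dot by auto. ring. }
  assert (D2 : dot V (vadd u1 u2) = dot (vsub s2 s1) (vadd u1 u2) - dot x1 u2 + dot x2 u1).
  { rewrite two_cones_V.
    transitivity (dot (vsub s2 s1) (vadd u1 u2) - dot x1 u1 - dot x1 u2 + dot x2 u1 + dot x2 u2);
      [vec_expand; ring|].
    unfold x1, x2. rewrite !dot_perp_l by auto. ring. }
  assert (B1 : Rabs (dot x1 u2) <= a * l1) by (eapply Rle_trans; [apply Rabs_dot_le|]; rewrite hu2; lra).
  assert (B2 : Rabs (dot x2 u1) <= a * l2) by (eapply Rle_trans; [apply Rabs_dot_le|]; rewrite hu1; lra).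
  rewrite <- (Rabs_right (1 + k)), <- Rabs_mult, <- D1, D2 by lra.
  eapply Rle_trans; [apply Rabs_triang|].
  eapply Rle_trans; [apply Rplus_le_compat_r, Rabs_triang|]. rewrite Rabs_Ropp. lra.
Qed.

End TwoCones.
End ConeDepth.

(** * Certified positivity of integer polynomials *)

Fixpoint horner (p : list Z) (x : R) : R :=
  match p with
  | [] => 0
  | c :: p' => IZR c + x * horner p' x
  end.

Fixpoint padd (p q : list Z) : list Z :=
  match p, q with
  | [], _ => q
  | _, [] => p
  | c :: p', d :: q' => (c + d)%Z :: padd p' q'
  end.

Lemma horner_padd p q x : horner (padd p q) x = horner p x + horner q x.
Proof.
  revert q; induction p as [|c p IH]; intros [|d q]; simpl; try ring.
  rewrite IH, plus_IZR; ring.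
Qed.

Definition mul_lin (c : Z) (p : list Z) : list Z := padd (0%Z :: p) (map (Z.mul c) p).

Lemma horner_map_mul c p x : horner (map (Z.mul c) p) x = IZR c * horner p x.
Proof. induction p as [|d p IH]; simpl; [ring|]. rewrite IH, mult_IZR; ring. Qed.

Lemma horner_mul_lin c p x : horner (mul_lin c p) x = (x + IZR c) * horner p x.
Proof. unfold mul_lin. rewrite horner_padd, horner_map_mul. simpl. ring. Qed.

(* [affine_comp n y0 p] has the coefficients of [y |-> n ^ deg p * p ((y + y0) / n)]. *)
Fixpoint affine_comp (n y0 : Z) (p : list Z) : list Z :=
  match p with
  | [] => []
  | c :: p' => padd [(c * n ^ Z.of_nat (length p'))%Z] (mul_lin y0 (affine_comp n y0 p'))
  end.

Lemma horner_affine_comp n y0 p z :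
  IZR n * horner (affine_comp n y0 p) (IZR n * z - IZR y0) = IZR n ^ length p * horner p z.
Proof.
  induction p as [|c p IH]; cbn [affine_comp length horner]; [ring|].
  rewrite horner_padd, horner_mul_lin; cbn [horner].
  rewrite mult_IZR, <- pow_IZR; cbn [pow].
  replace (IZR n * z - IZR y0 + IZR y0) with (IZR n * z) by ring.
  set (y := IZR n * z - IZR y0) in *.
  transitivity (IZR c * IZR n ^ length p * IZR n + IZR n * z * (IZR n * horner (affine_comp n y0 p) y));
    [ring | rewrite IH; ring].
Qed.

(* A lower bound of [p] on [[0, b]], obtained by interval evaluation of the Horner scheme. *)
Fixpoint horner_lb (b : Z) (p : list Z) : Z :=
  match p with
  | [] => 0
  | c :: p' => c + Z.min 0 (b * horner_lb b p')
  end.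

Lemma horner_lb_le b p y : 0 <= y <= IZR b -> IZR (horner_lb b p) <= horner p y.
Proof.
  intros hy; induction p as [|c p IH]; simpl; [lra|].
  rewrite plus_IZR; apply Rplus_le_compat_l.
  set (l := horner_lb b p) in *.
  assert (hl : IZR (Z.min 0 (b * l)) <= y * IZR l).
  { destruct (Z.min_spec 0 (b * l)) as [[h ->] | [h ->]]; apply IZR_le in h || apply IZR_lt in h;
      rewrite ?mult_IZR in *; destruct (Rle_dec 0 (IZR l)); nra. }
  nra.
Qed.

Lemma horner_pos_of_lb n y0 b p a : (0 < n)%Z -> (0 < horner_lb b (affine_comp n y0 p))%Z ->
  IZR y0 <= IZR n * a <= IZR y0 + IZR b -> 0 < horner p a.
Proof.
  intros hn hlb ha.
  apply IZR_lt in hn, hlb.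
  pose proof (horner_lb_le b (affine_comp n y0 p) (IZR n * a - IZR y0) ltac:(lra)) as hle.
  pose proof (horner_affine_comp n y0 p a) as E.
  assert (0 < IZR n ^ length p) by (apply pow_lt; lra).
  nra.
Qed.

Fixpoint grid_pos_check (n y0 b : Z) (m : nat) (p : list Z) : bool :=
  (0 <? horner_lb b (affine_comp n y0 p))%Z &&
  match m with O => true | S m' => grid_pos_check n (y0 + b) b m' p end.

Lemma horner_pos_of_grid n y0 b m p a : (0 < n)%Z -> grid_pos_check n y0 b m p = true ->
  IZR y0 <= IZR n * a <= IZR (y0 + Z.of_nat (S m) * b) -> 0 < horner p a.
Proof.
  intros hn; revert y0; induction m as [|m IH]; intros y0 hcheck ha;
    simpl in hcheck; apply andb_prop in hcheck as [hlb hrest]; apply Z.ltb_lt in hlb.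
  - apply (horner_pos_of_lb n y0 b); auto.
    rewrite <- plus_IZR. now replace (Z.of_nat 1 * b)%Z with b in ha by lia.
  - destruct (Rle_dec (IZR n * a) (IZR (y0 + b))) as [hle | hgt].
    + apply (horner_pos_of_lb n y0 b); auto. rewrite <- plus_IZR. lra.
    + apply (IH (y0 + b)%Z); auto. split; [lra|].
      replace (y0 + b + Z.of_nat (S m) * b)%Z with (y0 + Z.of_nat (S (S m)) * b)%Z by lia. lra.
Qed.

(** * The scalar inequality *)

(* In terms of a = tan alpha: [tau a] is the distance between the cameras over h,
   [sin4 a] = sin (4 alpha), [phi a] <= sin alpha, and [cdb a] bounds |vx u1 + vx u2|. *)
Definition tau (a : R) := 2 * (1 + a) / (1 - a).
Definition sin4 (a : R) := 4 * a * (1 - a^2) / (1 + a^2)^2.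
Definition phi (a : R) := a - a^3 / 2.
Definition cdb (a : R) := 99/140 * ((1 + a) * a^2 / 2 + 2 * a * (1 - a)).

Lemma sin4_bounds a : 0 <= a -> 15 * a^2 < 1 -> 0 <= sin4 a < 9/10.
Proof.
  intros ha h15. assert (a <= 2583/10000) by nra. unfold sin4.
  split; [apply Rdiv_nonneg; nra|].
  apply (Rmult_lt_reg_r ((1 + a^2)^2)); [nra|]. field_simplify; nra.
Qed.

Definition diam_bound (W V k : R) := W^2 / (1 - k^2) + k * V^2 / ((1 - k^2) * (1 - k)^2).

Lemma diam_bound_le_of_depths a K l1 l2 d W V : 0 <= K < 1 -> 0 <= l1 -> 0 <= l2 -> 0 <= V ->
  d * (1 - K) <= 4 * a^2 * (l1^2 + l2^2) ->
  (1 + K) * (l1^2 + l2^2) <= W^2 + K * (l1 - l2)^2 -> Rabs (l1 - l2) * (1 - K) <= V ->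
  d <= 4 * a^2 * diam_bound W V K.
Proof.
  intros hK hl1 hl2 hV C1 C2 C3.
  assert (he : (l1 - l2)^2 * (1 - K)^2 <= V^2).
  { rewrite <- pow2_abs. pose proof (Rabs_pos (l1 - l2)).
    assert (0 <= Rabs (l1 - l2) * (1 - K)) by (apply Rmult_le_pos; lra).
    replace (Rabs (l1 - l2) ^ 2 * (1 - K)^2) with ((Rabs (l1 - l2) * (1 - K))^2) by ring.
    apply pow_incr; lra. }
  unfold diam_bound.
  assert (0 < 1 - K^2) by nra. assert (0 < (1 - K)^2) by nra.
  apply (Rmult_le_reg_r ((1 - K^2) * (1 - K)^2)); [nra|].
  replace (4 * a^2 * (W^2 / (1 - K^2) + K * V^2 / ((1 - K^2) * (1 - K)^2)) * ((1 - K^2) * (1 - K)^2))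
    with (4 * a^2 * (W^2 * (1 - K)^2 + K * V^2)) by (field; nra).
  assert (d * (1 - K) * (1 + K) <= 4 * a^2 * (W^2 + K * (l1 - l2)^2)) by nra.
  assert (K * (l1 - l2)^2 * (1 - K)^2 <= K * V^2) by (rewrite Rmult_assoc; apply Rmult_le_compat_l; lra).
  nra.
Qed.

Lemma diam_bound_mono W V K Kb : 0 <= K -> K <= Kb -> Kb < 1 -> diam_bound W V K <= diam_bound W V Kb.
Proof.
  intros hK hKb hb. unfold diam_bound.
  assert (h1 : 0 < 1 - Kb^2) by nra. assert (h2 : 0 < (1 - Kb)^2) by nra.
  apply Rplus_le_compat.
  - apply Rmult_le_compat_l; [apply pow2_ge_0|]. apply Rinv_le_contravar; nra.
  - unfold Rdiv. rewrite !Rmult_assoc. apply Rmult_le_compat; [lra | | lra |].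
    + apply Rmult_le_pos; [apply pow2_ge_0 | left; apply Rinv_0_lt_compat, Rmult_lt_0_compat; nra].
    + apply Rmult_le_compat_l; [apply pow2_ge_0|]. apply Rinv_le_contravar; [nra|].
      apply Rmult_le_compat; nra.
Qed.

(* for a <= 3/20, bounds on tau + a (l1 + l2) and tau cdb + a (l1 + l2) *)
Definition W0 (a : R) := tau a / (1 - 99/70 * a).
Definition V0 (a : R) := tau a * cdb a + 99/70 * a * W0 a.

(* a Q0(a) / 24010000 is the gap in [small_poly_ineq] after clearing denominators *)
Definition Q0 := [304584000; -4132444400; 18403576800; -23728335680; -74720319956; 325421172948;
  -231301487641; -522220306414; 550098734184; 671317557356; -529989844511; -1065707589476;
  879461343516; 342730863410; -434349533122; 276633310756; -366079081960; 268453202952;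
  -33343723558; -122705950472; 173876835884; -147931197496; 78370099531; -17669928870;
  -12866125536; 18383030028; -12220857099; 5184297756; -1424398932; 192119202]%Z.

Lemma Q0_pos a : 0 <= a <= 3/20 -> 0 < horner Q0 a.
Proof.
  intros ha. apply (horner_pos_of_grid 400 0 3 19); [lia | vm_compute; reflexivity |].
  replace (0 + Z.of_nat 20 * 3)%Z with 60%Z by reflexivity. lra.
Qed.

Lemma small_poly_ineq a : 0 <= a <= 3/20 ->
  diam_bound (W0 a) (V0 a) (sin4 a) * (1 - 4 * phi a) * (1 - a)^4 <= 4 * (1 + 2 * phi a).
Proof.
  intros ha.
  assert (hK : 0 <= sin4 a < 9/10) by (apply sin4_bounds; nra).
  set (X := (1 - sin4 a ^ 2) * (1 - sin4 a)^2).
  assert (hX : 0 < X) by (unfold X; apply Rmult_lt_0_compat; nra).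
  assert (E : diam_bound (W0 a) (V0 a) (sin4 a) * X = W0 a ^ 2 * (1 - sin4 a)^2 + sin4 a * V0 a ^ 2)
    by (unfold diam_bound, X; field; nra).
  assert (Id : (4 * (1 + 2 * phi a) * X
                - (W0 a ^ 2 * (1 - sin4 a)^2 + sin4 a * V0 a ^ 2) * (1 - 4 * phi a) * (1 - a)^4)
               * ((1 - 99/70 * a)^2 * (1 + a^2)^8) = a * horner Q0 a / 24010000).
  { unfold X, V0, W0, tau, sin4, phi, cdb. cbn [horner Q0]. field. split; [lra|]. nra. }
  pose proof (Q0_pos a ha).
  assert (0 < (1 - 99/70 * a)^2 * (1 + a^2)^8) by (apply Rmult_lt_0_compat; apply pow_lt; nra).
  assert (0 <= a * horner Q0 a / 24010000) by (apply Rdiv_nonneg; nra).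
  assert (0 <= 4 * (1 + 2 * phi a) * X
               - (W0 a ^ 2 * (1 - sin4 a)^2 + sin4 a * V0 a ^ 2) * (1 - 4 * phi a) * (1 - a)^4).
  { apply (Rmult_le_reg_r ((1 - 99/70 * a)^2 * (1 + a^2)^8)); auto. rewrite Id. lra. }
  apply (Rmult_le_reg_r X); auto.
  replace (diam_bound (W0 a) (V0 a) (sin4 a) * (1 - 4 * phi a) * (1 - a)^4 * X)
    with ((W0 a ^ 2 * (1 - sin4 a)^2 + sin4 a * V0 a ^ 2) * (1 - 4 * phi a) * (1 - a)^4)
    by (rewrite <- E; ring).
  lra.
Qed.

Lemma sum_sqr_le_of_cross K l1 l2 W : K <= 1 ->
  l1^2 + l2^2 + 2 * K * l1 * l2 <= W^2 -> (1 + K) * (l1 + l2)^2 <= 2 * W^2.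
Proof.
  intros hK h.
  assert (0 <= (1 - K) * (l1 - l2)^2) by (apply Rmult_le_pos; [lra | apply pow2_ge_0]). nra.
Qed.

Lemma depth_ineq_small a K l1 l2 d :
  0 <= a <= 3/20 -> 0 <= K <= sin4 a -> 0 <= l1 -> 0 <= l2 ->
  d * (1 - K) <= 4 * a^2 * (l1^2 + l2^2) ->
  l1^2 + l2^2 + 2 * K * l1 * l2 <= (tau a + a * (l1 + l2))^2 ->
  Rabs (l1 - l2) * (1 - K) <= tau a * cdb a + a * (l1 + l2) ->
  d * (1 - 4 * phi a) <= (1 + 2 * phi a) * (16 * a^2 / (1 - a)^4).
Proof.
  intros ha hK hl1 hl2 C1 C2 C3.
  assert (hKb : 0 <= sin4 a < 9/10) by (apply sin4_bounds; nra).
  assert (htau : 0 < tau a) by (unfold tau; apply Rdiv_lt_0_compat; lra).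
  set (S := l1 + l2) in *. set (W := tau a + a * S) in *.
  assert (hS : 0 <= S) by (unfold S; lra).
  assert (hWpos : 0 <= W) by (unfold W; pose proof (Rmult_le_pos a S ltac:(lra) hS); lra).
  (* 99/70 > sqrt 2 *)
  assert (hSW : S <= 99/70 * W).
  { pose proof (sum_sqr_le_of_cross K l1 l2 W ltac:(lra) C2). fold S in H.
    apply Rsqr_incr_0_var; unfold Rsqr, W in *; nra. }
  assert (hW : W <= W0 a).
  { unfold W0. apply (Rmult_le_reg_r (1 - 99/70 * a)); [lra|]. field_simplify; unfold W in *; nra. }
  assert (hV : tau a * cdb a + a * S <= V0 a) by (unfold V0; nra).
  assert (hV0 : 0 <= V0 a).
  { assert (0 <= tau a * cdb a) by (apply Rmult_le_pos; unfold cdb; nra).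
    assert (0 <= a * S) by (apply Rmult_le_pos; lra). lra. }
  assert (C2' : (1 + K) * (l1^2 + l2^2) <= W0 a ^ 2 + K * (l1 - l2)^2).
  { assert (W^2 <= W0 a ^ 2) by (apply pow_incr; lra). unfold S, W in *. nra. }
  pose proof (diam_bound_le_of_depths a K l1 l2 d (W0 a) (V0 a) ltac:(lra) hl1 hl2 hV0 C1 C2'
                ltac:(fold S; lra)) as D.
  pose proof (diam_bound_mono (W0 a) (V0 a) K (sin4 a) ltac:(lra) ltac:(lra) ltac:(lra)) as M.
  pose proof (small_poly_ineq a ha) as U.
  assert (h4 : 0 <= 1 - 4 * phi a) by (unfold phi; nra).
  assert (h1a : 0 < (1 - a)^4) by (apply pow_lt; lra).
  replace ((1 + 2 * phi a) * (16 * a^2 / (1 - a)^4)) with (4 * a^2 * (4 * (1 + 2 * phi a)) / (1 - a)^4)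
    by (field; lra).
  apply (Rmult_le_reg_r ((1 - a)^4)); auto. field_simplify; [|lra].
  assert (d * (1 - 4 * phi a) <= 4 * a^2 * diam_bound (W0 a) (V0 a) (sin4 a) * (1 - 4 * phi a))
    by (apply Rmult_le_compat_r; nra).
  nra.
Qed.

Lemma depth_ratio_bracket a v w : 0 <= a <= 2583/10000 -> a <= w -> w <= v -> v <= 99/70 * a ->
  (2 - v - w) * v^2 * w^2 <= a^2 * (v + w - 2 * v * w).
Proof.
  intros ha haw hwv hv.
  set (r := sqrt (v * w)).
  assert (hr0 : 0 <= r) by apply sqrt_pos.
  assert (hr2 : r * r = v * w) by (apply sqrt_sqrt; nra).
  assert (hra : a <= r) by (apply Rsqr_incr_0_var; [unfold Rsqr; nra | lra]).
  assert (hrb : r <= 99/70 * a) by (apply Rsqr_incr_0_var; [unfold Rsqr; nra | nra]).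
  assert (hs : 2 * r <= v + w) by (apply Rsqr_incr_0_var; [unfold Rsqr; nra | lra]).
  assert (k1 : r * (a^2 + r^2) <= a^2 + r^4).
  { assert (r^3 <= a^2).
    { assert (r^3 <= (99/70 * a)^3) by (apply pow_incr; lra). nra. }
    assert (0 <= (1 - r) * (a^2 - r^3)) by (apply Rmult_le_pos; nra). nra. }
  replace ((2 - v - w) * v^2 * w^2) with ((2 - (v + w)) * (r * r)^2) by (rewrite hr2; ring).
  replace (v + w - 2 * v * w) with ((v + w) - 2 * (r * r)) by (rewrite hr2; ring).
  assert (0 <= a^2 + r^4) by nra.
  assert (2 * r * (a^2 + r^4) <= (v + w) * (a^2 + r^4)) by (apply Rmult_le_compat_r; lra).
  nra.
Qed.

(* x |-> (1 - x)^2 (1 - a^2 / x^2) is nondecreasing on [a, 99/70 a] *)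
Lemma depth_ratio_mono a K Kb v w : 0 <= a <= 2583/10000 -> 0 <= K -> K <= Kb -> Kb < 1 -> 0 <= v ->
  (1 + K) * v^2 <= 2 * a^2 -> a <= w -> w <= 99/70 * a -> 2 * a^2 <= w^2 * (1 + Kb) ->
  (1 - w)^2 * (1 - Kb) <= (1 - v)^2 * (1 - K).
Proof.
  intros ha hK hKK hKb hv hvK haw hw hwK.
  assert (hw1 : w < 1) by lra.
  assert (hv1 : v <= 99/70 * a) by (apply Rsqr_incr_0_var; [unfold Rsqr; nra | lra]).
  destruct (Rle_dec v w).
  - assert ((1 - w)^2 <= (1 - v)^2) by (apply pow_incr; lra).
    apply Rmult_le_compat; nra.
  - assert (hw0 : 0 < w) by nra.
    pose proof (depth_ratio_bracket a v w ha haw ltac:(lra) hv1) as B.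
    assert (Kf : (1 - w)^2 * (w^2 - a^2) * v^2 <= (1 - v)^2 * (v^2 - a^2) * w^2).
    { assert (0 <= (v - w) * (a^2 * (v + w - 2 * v * w) - (2 - v - w) * v^2 * w^2))
        by (apply Rmult_le_pos; lra).
      nra. }
    assert (E1 : (1 - K) * v^2 >= 2 * v^2 - 2 * a^2) by nra.
    assert (E2 : (1 - Kb) * w^2 <= 2 * w^2 - 2 * a^2) by nra.
    assert (S1 : (1 - v)^2 * (2 * v^2 - 2 * a^2) * w^2 <= (1 - v)^2 * ((1 - K) * v^2) * w^2).
    { apply Rmult_le_compat_r; [nra|]. apply Rmult_le_compat_l; [nra | lra]. }
    assert (S2 : (1 - w)^2 * ((1 - Kb) * w^2) * v^2 <= (1 - w)^2 * (2 * w^2 - 2 * a^2) * v^2).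
    { apply Rmult_le_compat_r; [nra|]. apply Rmult_le_compat_l; [nra | lra]. }
    assert (0 < v^2 * w^2) by (apply Rmult_lt_0_compat; nra).
    apply (Rmult_le_reg_r (v^2 * w^2)); auto. nra.
Qed.

Definition pivot (a : R) := 99/70 * a * (4 + sin4 a) / (4 + 3 * sin4 a).

Lemma pivot_bounds a : 0 <= a -> 15 * a^2 < 1 ->
  a <= pivot a /\ pivot a <= 99/70 * a /\ 2 * a^2 <= pivot a ^ 2 * (1 + sin4 a).
Proof.
  intros ha h15. pose proof (sin4_bounds a ha h15) as hK. unfold pivot.
  set (K := sin4 a) in *.
  repeat split.
  - apply (Rmult_le_reg_r (4 + 3 * K)); [lra|]. field_simplify; nra.
  - apply (Rmult_le_reg_r (4 + 3 * K)); [lra|]. field_simplify; nra.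
  - replace ((99/70 * a * (4 + K) / (4 + 3 * K))^2 * (1 + K))
      with (a^2 * ((99/70)^2 * (4 + K)^2 * (1 + K)) / (4 + 3 * K)^2) by (field; lra).
    apply (Rmult_le_reg_r ((4 + 3 * K)^2)); [nra|]. field_simplify; [|lra].
    assert (2 * (4 + 3 * K)^2 <= (99/70)^2 * (4 + K)^2 * (1 + K)) by nra. nra.
Qed.

(* 4 P2(a) / 1225 is the gap in [large_poly_ineq] after clearing denominators *)
Definition P2 := [0; -16240; 45924; 290080; 889260; 1694508; 402068; -6325044; -7427600; 9311300;
  5435324; -5780296; 2999468; -233020; -2086580; 1783612; -277768; -470404; 235200; -39200]%Z.

Lemma P2_pos a : 3/20 <= a <= 26/100 -> 0 < horner P2 a.
Proof.
  intros ha. apply (horner_pos_of_grid 100 15 11 0); [lia | vm_compute; reflexivity |].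
  replace (15 + Z.of_nat 1 * 11)%Z with 26%Z by reflexivity. lra.
Qed.

Lemma large_poly_ineq a : 3/20 <= a -> 15 * a^2 < 1 ->
  tau a ^ 2 * (1 - 4 * phi a) * (1 - a)^4 <= 4 * (1 + 2 * phi a) * ((1 - pivot a)^2 * (1 - sin4 a)).
Proof.
  intros ha h15. assert (a <= 2583/10000) by nra.
  set (kn := 4 * a * (1 - a^2)).
  assert (hM : 0 < (1 + a^2)^2 * (4 * (1 + a^2)^2 + 3 * kn)^2).
  { apply Rmult_lt_0_compat; apply pow_lt; unfold kn; nra. }
  assert (Id : (4 * (1 + 2 * phi a) * ((1 - pivot a)^2 * (1 - sin4 a))
                - tau a ^ 2 * (1 - 4 * phi a) * (1 - a)^4)
               * ((1 + a^2)^2 * (4 * (1 + a^2)^2 + 3 * kn)^2) = 4 * horner P2 a / 1225).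
  { unfold pivot, tau, sin4, phi, kn. cbn [horner P2]. field. split; [lra|]. unfold kn in hM. nra. }
  pose proof (P2_pos a ltac:(lra)).
  apply (Rmult_le_reg_r ((1 + a^2)^2 * (4 * (1 + a^2)^2 + 3 * kn)^2)); auto. nra.
Qed.

Lemma depth_ineq_large a K l1 l2 d : 3/20 <= a -> 15 * a^2 < 1 -> 4 * phi a < 1 ->
  0 <= K <= sin4 a -> 0 <= l1 -> 0 <= l2 -> 0 <= d ->
  d * (1 - K) <= 4 * a^2 * (l1^2 + l2^2) ->
  l1^2 + l2^2 + 2 * K * l1 * l2 <= (tau a + a * (l1 + l2))^2 ->
  d * (1 - 4 * phi a) <= (1 + 2 * phi a) * (16 * a^2 / (1 - a)^4).
Proof.
  intros ha h15 h4 hK hl1 hl2 hd C1 C2.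
  assert (hamax : a <= 2583/10000) by nra.
  pose proof (sin4_bounds a ltac:(lra) h15) as hKb.
  assert (htau : 0 < tau a) by (unfold tau; apply Rdiv_lt_0_compat; lra).
  set (S := l1 + l2) in *. set (W := tau a + a * S) in *.
  assert (hS : 0 <= S) by (unfold S; lra).
  assert (hW : 0 < W) by (unfold W; pose proof (Rmult_le_pos a S ltac:(lra) hS); lra).
  assert (hl : l1^2 + l2^2 <= W^2) by (pose proof (Rmult_le_pos (2 * K * l1) l2 ltac:(nra) hl2); lra).
  set (v := a * S / W).
  assert (hv0 : 0 <= v) by (apply Rdiv_nonneg; nra).
  assert (h1v : (1 - v) * W = tau a).
  { unfold v. replace ((1 - a * S / W) * W) with (W - a * S) by (field; lra). unfold W; ring. }
  assert (hvK : (1 + K) * v^2 <= 2 * a^2).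
  { pose proof (sum_sqr_le_of_cross K l1 l2 W ltac:(lra) C2). fold S in H.
    unfold v. apply (Rmult_le_reg_r (W^2)); [nra|].
    replace ((1 + K) * (a * S / W)^2 * W^2) with (a^2 * ((1 + K) * S^2)) by (field; lra).
    replace (2 * a^2 * W^2) with (a^2 * (2 * W^2)) by ring.
    apply Rmult_le_compat_l; nra. }
  destruct (pivot_bounds a ltac:(lra) h15) as [hwa [hwb hwK]].
  pose proof (depth_ratio_mono a K (sin4 a) v (pivot a) ltac:(lra) ltac:(lra) ltac:(lra) ltac:(lra)
                hv0 hvK hwa hwb hwK) as MO.
  set (P := (1 - pivot a)^2 * (1 - sin4 a)) in *.
  assert (hP : 0 < P) by (unfold P; apply Rmult_lt_0_compat; [apply pow_lt|]; lra).
  assert (E1 : d * P <= 4 * a^2 * tau a ^ 2).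
  { assert (d * (1 - K) * (1 - v)^2 <= 4 * a^2 * W^2 * (1 - v)^2) by (apply Rmult_le_compat_r; nra).
    assert (d * P <= d * ((1 - v)^2 * (1 - K))) by (apply Rmult_le_compat_l; lra).
    rewrite <- h1v. nra. }
  pose proof (large_poly_ineq a ha h15) as U. fold P in U.
  assert (h1a : 0 < (1 - a)^4) by (apply pow_lt; lra).
  apply (Rmult_le_reg_r (P * (1 - a)^4)); [apply Rmult_lt_0_compat; auto|].
  replace ((1 + 2 * phi a) * (16 * a^2 / (1 - a)^4) * (P * (1 - a)^4))
    with (4 * a^2 * (4 * (1 + 2 * phi a) * P)) by (field; lra).
  assert (d * P * ((1 - 4 * phi a) * (1 - a)^4) <= 4 * a^2 * tau a ^ 2 * ((1 - 4 * phi a) * (1 - a)^4))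
    by (apply Rmult_le_compat_r; [apply Rmult_le_pos; lra | lra]).
  assert (4 * a^2 * (tau a ^ 2 * (1 - 4 * phi a) * (1 - a)^4) <= 4 * a^2 * (4 * (1 + 2 * phi a) * P))
    by (apply Rmult_le_compat_l; nra).
  nra.
Qed.

Lemma depth_ineq a K l1 l2 d : 0 <= a -> 15 * a^2 < 1 -> 4 * phi a < 1 ->
  0 <= K <= sin4 a -> 0 <= l1 -> 0 <= l2 -> 0 <= d ->
  d * (1 - K) <= 4 * a^2 * (l1^2 + l2^2) ->
  l1^2 + l2^2 + 2 * K * l1 * l2 <= (tau a + a * (l1 + l2))^2 ->
  Rabs (l1 - l2) * (1 - K) <= tau a * cdb a + a * (l1 + l2) ->
  d * (1 - 4 * phi a) <= (1 + 2 * phi a) * (16 * a^2 / (1 - a)^4).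
Proof.
  intros ha h15 h4 hK hl1 hl2 hd C1 C2 C3.
  destruct (Rle_dec a (3/20)).
  - apply (depth_ineq_small a K l1 l2 d); auto; lra.
  - apply (depth_ineq_large a K l1 l2 d); auto; lra.
Qed.

Lemma depth_ineq_scaled a h K l1 l2 D : 0 < h -> 0 <= a -> 15 * a^2 < 1 -> 4 * phi a < 1 ->
  0 <= K <= sin4 a -> 0 <= l1 -> 0 <= l2 -> 0 <= D ->
  D * (1 - K) <= 4 * a^2 * (l1^2 + l2^2) ->
  l1^2 + l2^2 + 2 * K * l1 * l2 <= (h * tau a + a * (l1 + l2))^2 ->
  Rabs (l1 - l2) * (1 - K) <= h * tau a * cdb a + a * (l1 + l2) ->
  D * (1 - 4 * phi a) <= (1 + 2 * phi a) * (16 * a^2 / (1 - a)^4) * h^2.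
Proof.
  intros hh ha h15 h4 hK hl1 hl2 hD C1 C2 C3.
  assert (hh2 : 0 < h^2) by nra.
  pose proof (depth_ineq a K (l1 / h) (l2 / h) (D / h^2) ha h15 h4 hK
    ltac:(apply Rdiv_nonneg; lra) ltac:(apply Rdiv_nonneg; lra) ltac:(apply Rdiv_nonneg; lra)) as I.
  replace (D * (1 - 4 * phi a)) with (D / h^2 * (1 - 4 * phi a) * h^2) by (field; lra).
  apply Rmult_le_compat_r; [lra|]. apply I.
  - apply (Rmult_le_reg_r (h^2)); auto. field_simplify; lra.
  - apply (Rmult_le_reg_r (h^2)); auto.
    replace ((tau a + a * (l1 / h + l2 / h))^2 * h^2) with ((h * tau a + a * (l1 + l2))^2)
      by (field; lra).
    field_simplify; lra.
  - apply (Rmult_le_reg_r h); auto.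
    replace (l1 / h - l2 / h) with ((l1 - l2) / h) by (field; lra).
    unfold Rdiv at 1. rewrite Rabs_mult, Rabs_inv, (Rabs_right h) by lra. field_simplify; lra.
Qed.

(** * Two symmetric cameras *)

Lemma axes_dot_bounds alpha d1 d2 u1 u2 : 0 <= alpha <= PI / 8 ->
  vnorm d1 = 1 -> vnorm d2 = 1 -> vnorm u1 = 1 -> vnorm u2 = 1 ->
  uangle d1 d2 = PI / 2 + 2 * alpha -> uangle u1 d1 <= alpha -> uangle u2 d2 <= alpha ->
  cos (PI / 2 + 4 * alpha) <= dot u1 u2 <= 0.
Proof.
  intros ha n1 n2 hu1 hu2 a12 a1 a2. pose proof PI_RGT_0.
  pose proof (uangle_triangle d1 u1 d2 n1 hu1 n2).
  pose proof (uangle_triangle u1 u2 d2 hu1 hu2 n2).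
  pose proof (uangle_triangle u1 d1 d2 hu1 n1 n2).
  pose proof (uangle_triangle u1 d2 u2 hu1 n2 hu2).
  rewrite (uangle_comm d1 u1) in *. rewrite (uangle_comm d2 u2) in *.
  pose proof (uangle_bound u1 u2).
  split.
  - apply uangle_le_iff; auto; lra.
  - rewrite <- cos_PI2. apply dot_le_of_uangle_ge; auto; lra.
Qed.

Section SymmetricCameras.

Variables (T ca sa : R).
Hypotheses (hT : 0 < T) (hc : 0 < ca) (hs : 0 <= sa) (hcs : ca^2 + sa^2 = 1).

Let r := sqrt (1 + T^2).

Lemma vnorm_div_sqrt x z : x^2 + z^2 = 1 + T^2 -> vnorm (mkV (x / r) 0 (z / r)) = 1.
Proof.
  intros hxz. assert (H : r * r = 1 + T^2) by (apply sqrt_sqrt; nra). unfold vnorm, dot; cbn.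
  rewrite <- sqrt_1. f_equal.
  assert (0 < r) by (apply sqrt_lt_R0; nra).
  transitivity ((x^2 + z^2) / (r * r)); [field; lra | rewrite hxz, H; field; nra].
Qed.

(* directions from the two cameras to the target, and unit normals to them *)
Let d1 := mkV (T / r) 0 (-1 / r).
Let d2 := mkV (- T / r) 0 (-1 / r).
Let n1 := mkV (1 / r) 0 (T / r).
Let n2 := mkV (-1 / r) 0 (T / r).

Lemma axes_sum_x_le u1 u2 : vnorm u1 = 1 -> vnorm u2 = 1 -> ca <= dot u1 d1 -> ca <= dot u2 d2 ->
  Rabs (vx u1 + vx u2) <= (T * (1 - ca) + 2 * sa) / r.
Proof.
  intros hu1 hu2 h1 h2.
  assert (H : r * r = 1 + T^2) by (apply sqrt_sqrt; nra).
  assert (hr : 0 < r) by (apply sqrt_lt_R0; nra).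
  pose proof vnorm_div_sqrt as N.
  (* r e_x = T d1 + n1 and - r e_x = T d2 + n2 *)
  pose proof (dot_add_scale_bounds ca sa u1 d1 n1 T ltac:(lra) hs hcs ltac:(lra) hu1
                (N T (-1) ltac:(ring)) (N 1 T ltac:(ring))
                ltac:(unfold d1, n1, dot; cbn; field; lra) h1) as B1.
  pose proof (dot_add_scale_bounds ca sa u2 d2 n2 T ltac:(lra) hs hcs ltac:(lra) hu2
                (N (- T) (-1) ltac:(ring)) (N (-1) T ltac:(ring))
                ltac:(unfold d2, n2, dot; cbn; field; lra) h2) as B2.
  replace (dot u1 (vadd (vscale T d1) n1)) with (r * vx u1) in B1.
  2: { unfold d1, n1. vec_expand. transitivity (vx u1 * ((1 + T^2) / r)); [|field; lra].
       rewrite <- H. field. lra. }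
  replace (dot u2 (vadd (vscale T d2) n2)) with (- (r * vx u2)) in B2.
  2: { unfold d2, n2. vec_expand. transitivity (- (vx u2 * ((1 + T^2) / r))); [|field; lra].
       rewrite <- H. field. lra. }
  apply Rabs_le. split; apply (Rmult_le_reg_l r); auto; field_simplify; nra.
Qed.

End SymmetricCameras.

Lemma small_angle_trig alpha : 0 <= alpha < 1/4 ->
  0 < cos alpha /\ 0 <= sin alpha < cos alpha /\ (cos alpha)^2 + (sin alpha)^2 = 1 /\ sin alpha <= alpha.
Proof.
  intros ha. pose proof PI_RGT_0. pose proof PI2_3_2.
  destruct (cos_sin_quarter alpha ltac:(lra)) as [hc [hs hcs]].
  repeat split; auto; try lra.
  destruct (Req_dec alpha 0) as [-> | ]; [rewrite sin_0; lra | left; apply sin_lt_x; lra].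
Qed.

Lemma tan_quarter_sub alpha : 0 < cos alpha -> 0 <= sin alpha ->
  tan (PI / 4 - alpha) = (cos alpha - sin alpha) / (cos alpha + sin alpha).
Proof.
  intros hc hs. unfold tan. rewrite sin_minus, cos_minus, sin_PI4, cos_PI4.
  pose proof Rlt_sqrt2_0. field. split; lra.
Qed.

Lemma cos_PI2_add x : cos (PI / 2 + x) = - sin x.
Proof. rewrite cos_plus, cos_PI2, sin_PI2. ring. Qed.

(* the bound from [axes_sum_x_le], as a function of a = tan alpha *)
Lemma axes_x_bound_le ca sa : 0 < ca -> 0 <= sa -> sa < ca -> ca^2 + sa^2 = 1 ->
  let a := sa / ca in let T := (ca + sa) / (ca - sa) in
  (T * (1 - ca) + 2 * sa) / sqrt (1 + T^2) <= cdb a.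
Proof.
  intros hc hs hl e a T.
  assert (ha : 0 <= a) by (apply Rdiv_nonneg; lra).
  assert (ha1 : a < 1) by (unfold a; apply (Rmult_lt_reg_r ca); [lra|]; field_simplify; lra).
  assert (hsa : sa = a * ca) by (unfold a; field; lra).
  assert (hT : T = (1 + a) / (1 - a)) by (unfold T, a; field; split; lra).
  assert (hT0 : 0 < T) by (rewrite hT; apply Rdiv_lt_0_compat; lra).
  assert (h1 : 1 - ca <= a^2 / 2).
  { assert (a^2 = sa^2 / ca^2) by (unfold a; field; lra).
    rewrite H. apply (Rmult_le_reg_r (2 * ca^2)); [nra|]. field_simplify; [|lra].
    assert (0 <= (1 - ca) * (1 - ca) * (1 + 2 * ca)) by (apply Rmult_le_pos; nra). nra. }
  set (r := sqrt (1 + T^2)).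
  assert (hr0 : 0 < r) by (unfold r; apply sqrt_lt_R0; nra).
  assert (hr2 : r * r = 1 + T^2) by (unfold r; apply sqrt_sqrt; nra).
  (* r (1 - a) = sqrt (2 (1 + a^2)) >= sqrt 2 > 140/99 *)
  assert (hr : 140/99 <= r * (1 - a)).
  { apply Rsqr_incr_0_var; [|nra]. unfold Rsqr.
    replace (r * (1 - a) * (r * (1 - a))) with ((r * r) * (1 - a)^2) by ring.
    rewrite hr2, hT. field_simplify; [|lra]. nra. }
  unfold cdb. apply (Rmult_le_reg_l r); auto. field_simplify; [|lra].
  assert (T * (1 - ca) + 2 * sa <= T * (a^2 / 2) + 2 * a)
    by (apply Rplus_le_compat; [apply Rmult_le_compat_l|]; nra).
  assert (T * (a^2 / 2) + 2 * a = ((1 + a) * a^2 / 2 + 2 * a * (1 - a)) / (1 - a))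
    by (rewrite hT; field; lra).
  assert (0 <= (1 + a) * a^2 / 2 + 2 * a * (1 - a)) by nra.
  assert (((1 + a) * a^2 / 2 + 2 * a * (1 - a)) / (1 - a)
          <= r * (99/140 * ((1 + a) * a^2 / 2 + 2 * a * (1 - a)))).
  { apply (Rmult_le_reg_r (1 - a)); [lra|]. field_simplify; [|lra]. nra. }
  nra.
Qed.

Lemma tan_small_bounds alpha : 0 <= alpha < 1/4 ->
  0 <= tan alpha < 1 /\ 15 * (tan alpha)^2 < 1 /\ 0 <= phi (tan alpha) <= alpha.
Proof.
  intros ha. destruct (small_angle_trig alpha ha) as [hc [[hs hsc] [hcs hsa]]].
  unfold tan. set (c := cos alpha) in *. set (s := sin alpha) in *.
  assert (hsc' : s = s / c * c) by (field; lra).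
  set (a := s / c) in *. clearbody a.
  assert (ha0 : 0 <= a) by nra. assert (ha1 : a < 1) by nra.
  assert (hc2 : c^2 * (1 + a^2) = 1) by (rewrite hsc' in hcs; nra).
  (* cos alpha = 1 / sqrt (1 + a^2) >= 1 - a^2 / 2, so phi a <= a cos alpha = sin alpha *)
  assert (hcl : 1 - a^2 / 2 <= c).
  { apply Rsqr_incr_0_var; [unfold Rsqr | lra].
    assert (0 <= a^2 * a^2 * (3 - a^2)) by (apply Rmult_le_pos; nra). nra. }
  unfold phi. repeat split; try lra; nra.
Qed.

Lemma sin4_tan alpha : 0 < cos alpha ->
  sin4 (tan alpha) = 4 * sin alpha * cos alpha * ((cos alpha)^2 - (sin alpha)^2).
Proof.
  intros hc. pose proof (sin2_cos2 alpha) as E. unfold Rsqr in E.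
  unfold sin4, tan.
  transitivity (4 * sin alpha * cos alpha * ((cos alpha)^2 - (sin alpha)^2)
                / ((sin alpha)^2 + (cos alpha)^2)^2); [field; split; nra|].
  replace ((sin alpha)^2 + (cos alpha)^2) with 1 by lra. field.
Qed.

Lemma tau_tan alpha : 0 < cos alpha -> sin alpha < cos alpha ->
  tau (tan alpha) = 2 * ((cos alpha + sin alpha) / (cos alpha - sin alpha)).
Proof. intros. unfold tau, tan. field. split; lra. Qed.

Lemma uncertainty_ratio_mono x y : 0 <= x <= y -> 4 * y < 1 ->
  (1 + 2 * x) / (1 - 4 * x) <= (1 + 2 * y) / (1 - 4 * y).
Proof.
  intros. apply (Rmult_le_reg_r ((1 - 4 * x) * (1 - 4 * y))); [nra|].
  field_simplify; [nra | lra | lra].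
Qed.

Lemma uncertainty_le_of_depth_ineq alpha a h D : 0 <= phi a <= alpha -> alpha < 1/4 -> a < 1 ->
  D * (1 - 4 * phi a) <= (1 + 2 * phi a) * (16 * a^2 / (1 - a)^4) * h^2 ->
  D <= (1 + 2 * alpha) / (1 - 4 * alpha) * (h * (4 * a / (1 - a)^2))^2.
Proof.
  intros hphi ha ha1 I.
  assert (h4 : 0 < 1 - 4 * phi a) by lra.
  assert (h1a : 0 < (1 - a)^4) by (apply pow_lt; lra).
  apply (Rle_trans _ ((1 + 2 * phi a) / (1 - 4 * phi a) * (h * (4 * a / (1 - a)^2))^2)).
  - apply (Rmult_le_reg_r (1 - 4 * phi a)); auto.
    replace ((1 + 2 * phi a) / (1 - 4 * phi a) * (h * (4 * a / (1 - a)^2))^2 * (1 - 4 * phi a))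
      with ((1 + 2 * phi a) * (16 * a^2 / (1 - a)^4) * h^2) by (field; lra). lra.
  - apply Rmult_le_compat_r; [apply pow2_ge_0|]. apply uncertainty_ratio_mono; lra.
Qed.

Lemma dist_le_of_dot_le p q k b E : 0 <= k -> 0 <= b <= E ->
  dot (vsub p q) (vsub p q) <= k * b^2 -> Defs.dist p q <= sqrt k * E.
Proof.
  intros hk hb D. unfold Defs.dist, vnorm.
  rewrite <- (sqrt_pow2 E) by lra. rewrite <- sqrt_mult by auto using pow2_ge_0.
  apply sqrt_le_1_alt. eapply Rle_trans; [exact D|].
  apply Rmult_le_compat_l; auto. apply pow_incr; lra.
Qed.

Section TwoCameras.

Variables (alpha h : R) (g : vec3).
Hypotheses (hh : 0 < h) (ha : 0 <= alpha < 1/4).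

Let ca := cos alpha.
Let sa := sin alpha.
Let T := (ca + sa) / (ca - sa).
Let r := sqrt (1 + T^2).
Let s1 := vadd g (mkV (- (h * T)) 0 h).
Let s2 := vadd g (mkV (h * T) 0 h).
Let d1 := mkV (T / r) 0 (-1 / r).
Let d2 := mkV (- T / r) 0 (-1 / r).

Lemma camera_trig : 0 < ca /\ 0 <= sa < ca /\ ca^2 + sa^2 = 1 /\ 0 < T /\ 0 < r /\ r * r = 1 + T^2.
Proof.
  destruct (small_angle_trig alpha ha) as [hc [[hs hsc] [hcs _]]]. fold ca sa in hc, hs, hsc, hcs.
  assert (hT : 0 < T) by (apply Rdiv_lt_0_compat; lra).
  repeat split; auto; [apply sqrt_lt_R0; nra | apply sqrt_sqrt; nra].
Qed.

Lemma camera_axes_dot_bounds u1 u2 : vnorm u1 = 1 -> vnorm u2 = 1 ->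
  cone alpha s1 u1 g -> cone alpha s2 u2 g ->
  - (4 * sa * ca * (ca^2 - sa^2)) <= dot u1 u2 <= 0 /\ Rabs (vx u1 + vx u2) <= cdb (sa / ca).
Proof.
  intros hu1 hu2 hg1 hg2.
  destruct camera_trig as [hc [[hs hsc] [hcs [hT [hr hr2]]]]].
  pose proof PI_RGT_0. pose proof PI2_3_2.
  pose proof (vnorm_div_sqrt T) as N. fold r in N.
  assert (n1 : vnorm d1 = 1) by (apply N; ring).
  assert (n2 : vnorm d2 = 1) by (apply N; ring).
  assert (c1 : ca <= dot u1 d1).
  { apply (cone_axis_dot_ge alpha s1 u1 g (h * r)); auto; [lra | nra |].
    unfold s1, d1. apply vec3_eq; vec_expand; field; lra. }
  assert (c2 : ca <= dot u2 d2).
  { apply (cone_axis_dot_ge alpha s2 u2 g (h * r)); auto; [lra | nra |].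
    unfold s2, d2. apply vec3_eq; vec_expand; field; lra. }
  split.
  -     assert (a12 : uangle d1 d2 = PI / 2 + 2 * alpha).
    { apply uangle_of_cos; [lra|]. rewrite cos_PI2_add, sin_2a. fold ca sa.
      unfold d1, d2, dot; cbn. transitivity ((1 - T^2) / (r * r)); [field; lra|].
      rewrite hr2. unfold T. field_simplify; [| split; [lra | nra]].
      replace (2 * ca ^ 2 + 2 * sa ^ 2) with 2 by lra. field. }
    replace (- (4 * sa * ca * (ca^2 - sa^2))) with (cos (PI / 2 + 4 * alpha)).
    + apply (axes_dot_bounds alpha d1 d2); auto; [lra | |];
        rewrite uangle_le_iff by (auto; lra); fold ca; lra.
    + rewrite cos_PI2_add. replace (4 * alpha) with (2 * (2 * alpha)) by ring.
      rewrite sin_2a, sin_2a, cos_2a. fold ca sa. ring.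
  - eapply Rle_trans; [apply (axes_sum_x_le T ca sa); auto; lra|].
    apply axes_x_bound_le; auto.
Qed.

Lemma camera_baseline : vsub s2 s1 = mkV (h * tau (tan alpha)) 0 0.
Proof.
  destruct camera_trig as [hc [[hs hsc] _]].
  rewrite tau_tan by auto. fold ca sa T. unfold s1, s2. apply vec3_eq; vec_expand; ring.
Qed.

Lemma camera_baseline_vnorm : vnorm (vsub s2 s1) = h * tau (tan alpha).
Proof.
  destruct camera_trig as [hc [[hs hsc] [_ [hT _]]]].
  assert (0 <= h * tau (tan alpha)) by (rewrite tau_tan by auto; fold ca sa T; nra).
  rewrite camera_baseline. unfold vnorm. vec_expand.
  replace (_ * _ + 0 * 0 + 0 * 0) with ((h * tau (tan alpha))^2) by ring. apply sqrt_pow2; auto.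
Qed.

Lemma camera_baseline_dot v : dot (vsub s2 s1) v = h * tau (tan alpha) * vx v.
Proof. rewrite camera_baseline. vec_expand. ring. Qed.

Lemma two_cameras_dist_sqr_le u p q :
  let C := fun s => s = s1 \/ s = s2 in
  admissible_axes alpha g C u -> cone_inter alpha C u p -> cone_inter alpha C u q ->
  dot (vsub p q) (vsub p q)
    <= (1 + 2 * alpha) / (1 - 4 * alpha) * (h * (4 * tan alpha / (1 - tan alpha)^2))^2.
Proof.
  intros C hadm hp hq.
  destruct camera_trig as [hc [[hs hsc] [hcs [hT [hr hr2]]]]].
  destruct (tan_small_bounds alpha ha) as [[ha0 ha1] [h15 hphi]].
  assert (hA : 0 <= alpha <= PI) by (pose proof PI2_3_2; lra).
  destruct (hadm s1 (or_introl eq_refl)) as [hu1 hg1].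
  destruct (hadm s2 (or_intror eq_refl)) as [hu2 hg2].
  set (u1 := u s1) in *. set (u2 := u s2) in *.
  destruct (camera_axes_dot_bounds u1 u2 hu1 hu2 hg1 hg2) as [[K0 K1] X].
  pose proof (cone_dot_ge alpha s1 u1 p hA hu1 (hp s1 (or_introl eq_refl))) as P1.
  pose proof (cone_dot_ge alpha s2 u2 p hA hu2 (hp s2 (or_intror eq_refl))) as P2.
  pose proof (cone_dot_ge alpha s1 u1 q hA hu1 (hq s1 (or_introl eq_refl))) as Q1.
  pose proof (cone_dot_ge alpha s2 u2 q hA hu2 (hq s2 (or_intror eq_refl))) as Q2.
  fold ca in P1, P2, Q1, Q2.
  destruct (two_cones_depth_ge0 ca sa hc hs hcs s1 s2 u1 u2 p q hu1 hu2 P1 Q1 P2 Q2) as [L1 L2].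
  pose proof (two_cones_diam_sqr_le ca sa hc hs hcs s1 s2 u1 u2 p q hu1 hu2 K1 P1 Q1 P2 Q2) as R1.
  pose proof (two_cones_depth_sqr_le ca sa hc hs hcs s1 s2 u1 u2 p q hu1 hu2 P1 Q1 P2 Q2) as R2.
  pose proof (two_cones_depth_diff_le ca sa hc hs hcs s1 s2 u1 u2 p q hu1 hu2 P1 Q1 P2 Q2) as R3.
  rewrite camera_baseline_vnorm in R2. rewrite camera_baseline_dot in R3.
  change (vx (vadd u1 u2)) with (vx u1 + vx u2) in R3.
  replace (sa / ca) with (tan alpha) in * by reflexivity.
  set (a := tan alpha) in *.
  assert (htau : 0 < tau a) by (unfold a; rewrite tau_tan by auto; fold ca sa T; lra).
  (* reduce to the scalar inequality, with K = - dot u1 u2 *)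
  assert (hK : 4 * sa * ca * (ca^2 - sa^2) = sin4 a) by (symmetry; apply sin4_tan; auto).
  rewrite hK in K0.
  set (l1 := dot (vsub (mid p q) s1) u1) in *. set (l2 := dot (vsub (mid p q) s2) u2) in *.
  set (D := dot (vsub p q) (vsub p q)) in *.
  assert (F3 : Rabs (l1 - l2) * (1 - - dot u1 u2) <= h * tau a * cdb a + a * (l1 + l2)).
  { rewrite Rabs_mult, (Rabs_right (h * tau a)) in R3 by (apply Rle_ge, Rmult_le_pos; lra).
    replace (1 - - dot u1 u2) with (1 + dot u1 u2) by ring.
    pose proof (Rmult_le_compat_l (h * tau a) _ _ ltac:(apply Rmult_le_pos; lra) X). lra. }
  apply (uncertainty_le_of_depth_ineq alpha a h D hphi ltac:(lra) ha1).
  apply (depth_ineq_scaled a h (- dot u1 u2) l1 l2 D hh ha0 h15 ltac:(lra) ltac:(lra) L1 L2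
           (dot_self_ge0 _) ltac:(lra) ltac:(lra) F3).
Qed.

End TwoCameras.

Theorem theorem2 (h alpha : R) (g : vec3) :
  0 < h -> 0 <= alpha -> alpha < 1/4 -> ground g ->
  let t := 2 * h / tan (PI / 4 - alpha) in
  let sp := vadd g (mkV (- t / 2) 0 h) in
  let sq := vadd g (mkV (t / 2) 0 h) in
  forall E : R,
    eps_le alpha g (view_plane h) E ->
    eps_le alpha g (fun s => s = sp \/ s = sq)
      (sqrt ((1 + 2 * alpha) / (1 - 4 * alpha)) * E).
Proof.
  intros hh ha0 ha1 hg t sp sq E hE u hadm p q hp hq.
  assert (ha : 0 <= alpha < 1/4) by lra.
  destruct (small_angle_trig alpha ha) as [hc [[hs hsc] _]].
  pose proof (eps_view_plane_ge h alpha g E hh ltac:(pose proof PI2_3_2; lra) hg hE) as LB.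
  set (T := (cos alpha + sin alpha) / (cos alpha - sin alpha)).
  assert (ht : t / 2 = h * T) by (unfold t, T; rewrite tan_quarter_sub by lra; field; split; lra).
  assert (Hsp : sp = vadd g (mkV (- (h * T)) 0 h)) by (unfold sp; rewrite <- ht; f_equal; f_equal; lra).
  assert (Hsq : sq = vadd g (mkV (h * T) 0 h)) by (unfold sq; rewrite <- ht; reflexivity).
  clearbody sp sq. subst sp sq.
  apply (dist_le_of_dot_le _ _ _ (h * (4 * tan alpha / (1 - tan alpha)^2)));
    [apply Rdiv_nonneg; lra | | apply (two_cameras_dist_sqr_le alpha h g hh ha u p q hadm hp hq)].
  destruct (tan_small_bounds alpha ha) as [[? ?] _].
  split; [apply Rmult_le_pos; [lra | apply Rdiv_nonneg; nra] | exact LB].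
Qed.
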